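(* Let $\mathbf{Y}$ be a generalised binary matrix and let $(\ell,k)$ be a simplicial $1$ of $\mathbf{Y}$. If $\mathbf{Y}'$ is the generalised binary matrix obtained by removing the simplicial $1$ at $(\ell,k)$, then $i(\mathbf{Y})=i(\mathbf{Y}')+1$ and $br(\mathbf{Y})=br(\mathbf{Y}')+1$.
   Context: A generalised binary matrix is a matrix with entries in $\{0,1,?\}$; a (standard) binary matrix has entries in $\{0,1\}$. For such a matrix $\mathbf{Y}$, $\mathrm{supp}(\mathbf{Y})=\{(i,j): y_{i,j}=1\}$. A rectangle of $\mathbf{Y}$ is a set $I\times J$ of positions (with $I$ a set of rows, $J$ a set of columns) such that no entry $y_{i,j}$ with $(i,j)\in I\times J$ equals $0$. An isolated set of $\mathbf{Y}$ is a subset of $\mathrm{supp}(\mathbf{Y})$ no two distinct elements of which lie in a common rectangle of $\mathbf{Y}$; $i(\mathbf{Y})$ is the maximum size of an isolated set. $br(\mathbf{Y})$ is the minimum number of rectangles of $\mathbf{Y}$ whose union contains $\mathrm{supp}(\mathbf{Y})$ (entries equal to $?$ may be covered but need not be). A position $(\ell,k)\in\mathrm{supp}(\mathbf{Y})$ is a simplicial $1$ of $\mathbf{Y}$ if, with $I=\{i: y_{i,k}\in\{1,?\}\}$ and $J=\{j: y_{\ell,j}\in\{1,?\}\}$, the set $I\times J$ is a rectangle of $\mathbf{Y}$. Removing the simplicial $1$ at $(\ell,k)$ means deleting row $\ell$ and column $k$ of $\mathbf{Y}$ and replacing every remaining entry with position in $I\times J$ by $?$. *)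

From HB Require Import structures.
From mathcomp Require Import all_boot all_algebra.
Set Implicit Arguments. Unset Strict Implicit. Unset Printing Implicit Defensive.

(* Entries of a generalised binary matrix: 0, 1, or ? *)
Inductive entry := E0 | E1 | Eq.

Definition entry_eqb (a b : entry) : bool :=
  match a, b with E0, E0 | E1, E1 | Eq, Eq => true | _, _ => false end.
Lemma entry_eqP : Equality.axiom entry_eqb.
Proof. by case; case; constructor. Qed.
HB.instance Definition _ := hasDecEq.Build entry entry_eqP.

Section GBM.
Variables (m n : nat).
Implicit Type Y : 'M[entry]_(m, n).

Definition supp Y : {set 'I_m * 'I_n} := [set p | Y p.1 p.2 == E1].

Definition is_rect Y (I : {set 'I_m}) (J : {set 'I_n}) : bool :=
  [forall i in I, forall j in J, Y i j != E0].

Definition isolated Y (S : {set 'I_m * 'I_n}) : bool :=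
  (S \subset supp Y) &&
  [forall p in S, forall q in S, (p != q) ==>
     ~~ [exists I : {set 'I_m}, exists J : {set 'I_n},
           [&& is_rect Y I J, p.1 \in I, p.2 \in J, q.1 \in I & q.2 \in J]]].

Definition iso_num Y : nat := \max_(S : {set 'I_m * 'I_n} | isolated Y S) #|S|.

Definition rect_cover Y (F : {set {set 'I_m} * {set 'I_n}}) : bool :=
  [forall R in F, is_rect Y R.1 R.2] &&
  [forall p in supp Y, exists R in F, (p.1 \in R.1) && (p.2 \in R.2)].

Definition cover_of_size Y (k : nat) : bool :=
  [exists F : {set {set 'I_m} * {set 'I_n}}, rect_cover Y F && (#|F| == k)].

Lemma cover_exists Y : exists k, cover_of_size Y k.
Proof.
pose F := [set ([set p.1], [set p.2]) | p in supp Y].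
exists #|F|; apply/existsP; exists F; rewrite eqxx andbT.
apply/andP; split.
  apply/forallP => R; apply/implyP => /imsetP [p Hp ->] /=.
  apply/forallP => i; apply/implyP; rewrite in_set1 => /eqP ->.
  apply/forallP => j; apply/implyP; rewrite in_set1 => /eqP ->.
  by move: Hp; rewrite inE => /eqP ->.
apply/forallP => p; apply/implyP => Hp; apply/existsP.
exists ([set p.1], [set p.2]); rewrite !in_set1 !eqxx !andbT.
by apply/imsetP; exists p.
Qed.

Definition br_num Y : nat := ex_minn (cover_exists Y).

End GBM.

Definition simplicial m n (Y : 'M[entry]_(m, n)) (l : 'I_m) (k : 'I_n) : bool :=
  (Y l k == E1) &&
  is_rect Y [set i | Y i k != E0] [set j | Y l j != E0].

Definition remove_simplicial m n (Y : 'M[entry]_(m.+1, n.+1))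
    (l : 'I_m.+1) (k : 'I_n.+1) : 'M[entry]_(m, n) :=
  \matrix_(i < m, j < n)
    if (Y (lift l i) k != E0) && (Y l (lift k j) != E0) then Eq
    else Y (lift l i) (lift k j).

From mathcomp Require Import all_boot all_algebra.
Set Implicit Arguments. Unset Strict Implicit. Unset Printing Implicit Defensive.

(* Let I x J be the rectangle of the simplicial 1 at (l,k).  A 1 of Y that is
   not a 1 of Y' (lifted back) lies in I x J, and a position of Y' that is a 1
   is never in a common rectangle with (l,k), since otherwise it would lie in
   I x J and have been turned into ?.  Hence an isolated set (resp. rectangle
   cover) of Y' lifts to one of Y and (l,k) (resp. I x J) can be added;
   conversely, an isolated set of Y has at most one element in the rectangle
   I x J, and a cover of Y restricts to a cover of Y' once the rectangle
   containing (l,k) is discarded. *)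

Section GeneralisedBinaryMatrix.
Variables m n : nat.
Implicit Types (Y : 'M[entry]_(m, n)) (I : {set 'I_m}) (J : {set 'I_n}).

Lemma rectP Y I J :
  reflect (forall i j, i \in I -> j \in J -> Y i j != E0) (is_rect Y I J).
Proof.
apply: (iffP forallP) => [H i j Hi Hj | H i].
  by have /implyP/(_ Hi)/forallP/(_ j)/implyP/(_ Hj) := H i.
by apply/implyP => Hi; apply/forallP => j; apply/implyP; exact: H.
Qed.

Lemma isolatedP Y (S : {set 'I_m * 'I_n}) :
  reflect ((forall p, p \in S -> Y p.1 p.2 = E1) /\
           (forall p q I J, p \in S -> q \in S -> p != q -> is_rect Y I J ->
              p.1 \in I -> p.2 \in J -> q.1 \in I -> q.2 \in J -> False))
          (isolated Y S).
Proof.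
apply: (iffP andP) => [[/subsetP Hsupp /forallP Hsep] | [Hsupp Hsep]]; split.
- by move=> p /Hsupp; rewrite inE => /eqP.
- move=> p q I J Hp Hq Hpq HIJ pI pJ qI qJ.
  have /implyP/(_ Hp)/forallP/(_ q)/implyP/(_ Hq)/implyP/(_ Hpq)/negP := Hsep p.
  by apply; apply/existsP; exists I; apply/existsP; exists J; apply/and5P.
- by apply/subsetP => p /Hsupp Hp; rewrite inE Hp.
- apply/forallP => p; apply/implyP => Hp; apply/forallP => q; apply/implyP => Hq.
  apply/implyP => Hpq; apply/negP => /existsP [I /existsP [J /and5P [HIJ]]].
  exact: Hsep Hp Hq Hpq HIJ.
Qed.

Lemma iso_num_witness Y : exists2 S, isolated Y S & iso_num Y = #|S|.
Proof.
have set0_isolated : set0 \in [pred S | isolated Y S].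
  by rewrite inE; apply/isolatedP; split=> [p | p q I J]; rewrite inE.
have [S HS E] := eq_bigmax_cond (fun S : {set _} => #|S|)
  (introT card_gt0P (ex_intro _ set0 set0_isolated)).
by exists S; [move: HS; rewrite inE | rewrite /iso_num -E].
Qed.

Lemma leq_iso_num Y S : isolated Y S -> #|S| <= iso_num Y.
Proof. exact: (@leq_bigmax_cond _ (isolated Y) (fun S : {set _} => #|S|)). Qed.

Lemma rect_coverP Y (F : {set {set 'I_m} * {set 'I_n}}) :
  reflect ((forall R, R \in F -> is_rect Y R.1 R.2) /\
           (forall p, Y p.1 p.2 = E1 ->
              exists2 R, R \in F & (p.1 \in R.1) && (p.2 \in R.2)))
          (rect_cover Y F).
Proof.
apply: (iffP andP) => [[/forallP HF /forallP Hcov] | [HF Hcov]]; split.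
- by move=> R; apply/implyP.
- move=> p Hp; have /implyP := Hcov p; rewrite inE Hp => /(_ isT).
  by case/existsP => R /andP [? ?]; exists R.
- by apply/forallP => R; apply/implyP; exact: HF.
- apply/forallP => p; apply/implyP; rewrite inE => /eqP /Hcov [R HR pR].
  by apply/existsP; exists R; rewrite HR.
Qed.

Lemma br_num_witness Y : exists2 F, rect_cover Y F & br_num Y = #|F|.
Proof. by rewrite /br_num; case: ex_minnP => b /existsP [F /andP [? /eqP]]; exists F. Qed.

Lemma leq_br_num Y F : rect_cover Y F -> br_num Y <= #|F|.
Proof.
move=> HF; rewrite /br_num; case: ex_minnP => b _; apply.
by apply/existsP; exists F; rewrite HF eqxx.
Qed.

End GeneralisedBinaryMatrix.

Definition lift_pos m n (l : 'I_m.+1) (k : 'I_n.+1) (p : 'I_m * 'I_n) :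
  'I_m.+1 * 'I_n.+1 := (lift l p.1, lift k p.2).

Lemma lift_pos_inj m n (l : 'I_m.+1) (k : 'I_n.+1) : injective (lift_pos l k).
Proof.
by move=> [a b] [c d] E; move: (congr1 fst E) (congr1 snd E) => /= /lift_inj -> /lift_inj ->.
Qed.

Lemma remove_simplicial_eq1 m n (Y : 'M[entry]_(m.+1, n.+1)) l k i j :
  (remove_simplicial Y l k i j = E1) <->
  (Y (lift l i) (lift k j) = E1 /\
   ~~ ((Y (lift l i) k != E0) && (Y l (lift k j) != E0))).
Proof. by rewrite mxE; case: ifP => H; split => // -[]. Qed.

Section RemoveSimplicial.
Variables (m n : nat) (Y : 'M[entry]_(m.+1, n.+1)) (l : 'I_m.+1) (k : 'I_n.+1).
Hypothesis Ysimpl : simplicial Y l k.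

Let Y' := remove_simplicial Y l k.
Let I0 := [set i | Y i k != E0].
Let J0 := [set j | Y l j != E0].

Lemma simplicial_eq1 : Y l k = E1.
Proof. by case/andP: Ysimpl => /eqP. Qed.

Lemma simplicial_rect : is_rect Y I0 J0.
Proof. by case/andP: Ysimpl. Qed.

Lemma remove_simplicial_eq0 i j : (Y' i j == E0) = (Y (lift l i) (lift k j) == E0).
Proof.
rewrite mxE; case: ifP => // /andP [Hi Hj]; apply/esym/negbTE.
by apply: (rectP _ _ _ simplicial_rect); rewrite inE.
Qed.

Lemma is_rect_lift (A : {set 'I_m}) (B : {set 'I_n}) :
  is_rect Y' A B -> is_rect Y (lift l @: A) (lift k @: B).
Proof.
move/rectP => HAB; apply/rectP => _ _ /imsetP [i Hi ->] /imsetP [j Hj ->].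
by rewrite -remove_simplicial_eq0; apply: HAB.
Qed.

Lemma is_rect_preimage (A : {set 'I_m.+1}) (B : {set 'I_n.+1}) :
  is_rect Y A B -> is_rect Y' (lift l @^-1: A) (lift k @^-1: B).
Proof.
move/rectP => HAB; apply/rectP => i j; rewrite !inE => Hi Hj.
by rewrite remove_simplicial_eq0; apply: HAB.
Qed.

Lemma no_rect_simplicial_remove_eq1 p (A : {set 'I_m.+1}) (B : {set 'I_n.+1}) :
  Y' p.1 p.2 = E1 -> is_rect Y A B -> l \in A -> k \in B ->
  lift l p.1 \in A -> lift k p.2 \in B -> False.
Proof.
move=> /remove_simplicial_eq1 [_ /negP Hp] /rectP HAB lA kB pA pB.
by apply: Hp; rewrite !HAB.
Qed.

Lemma supp_remove_simplicial x : Y x.1 x.2 = E1 ->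
  (exists2 p, x = lift_pos l k p & Y' p.1 p.2 = E1) \/ (x.1 \in I0) && (x.2 \in J0).
Proof.
case: x => a b /= Hab; rewrite !inE.
case: (unliftP l a) => [a'|] Ha; last by right; rewrite Ha simplicial_eq1 -Ha Hab.
case: (unliftP k b) => [b'|] Hb; last by right; rewrite Hb simplicial_eq1 -Hb Hab.
have [|HIJ] := boolP ((Y a k != E0) && (Y l b != E0)); first by right.
by left; exists (a', b'); rewrite ?Ha ?Hb //; apply/remove_simplicial_eq1; rewrite -Ha -Hb.
Qed.

Lemma iso_num_remove_simplicial_lt : iso_num Y' < iso_num Y.
Proof.
have [S' /isolatedP [S'supp S'sep] ->] := iso_num_witness Y'.
pose S := (l, k) |: lift_pos l k @: S'.
have lk_notin : (l, k) \notin lift_pos l k @: S'.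
  by apply/imsetP => -[p _ /(congr1 fst) /= /eqP]; rewrite (negbTE (neq_lift l p.1)).
have <- : #|S| = #|S'|.+1 by rewrite cardsU1 lk_notin card_imset //; exact: lift_pos_inj.
apply/leq_iso_num/isolatedP; split.
  move=> x /setU1P [-> | /imsetP [p /S'supp Hp ->]]; first exact: simplicial_eq1.
  by case/remove_simplicial_eq1: Hp.
move=> x y I J /setU1P [-> | /imsetP [p Hp ->]] /setU1P [-> | /imsetP [q Hq ->]] Hxy HIJ.
- by rewrite eqxx in Hxy.
- by move=> *; exact: no_rect_simplicial_remove_eq1 (S'supp _ Hq) HIJ _ _ _ _.
- by move=> *; exact: no_rect_simplicial_remove_eq1 (S'supp _ Hp) HIJ _ _ _ _.
have Hpq : p != q by apply: contraNneq Hxy => ->.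
by move=> *; apply: S'sep Hp Hq Hpq (is_rect_preimage HIJ) _ _ _ _; rewrite inE.
Qed.

Lemma isolated_card_rect_le1 S : isolated Y S -> #|S :&: setX I0 J0| <= 1.
Proof.
case/isolatedP => _ Ssep; rewrite leqNgt; apply/card_gt1P => -[x [y []]].
rewrite !inE => /andP [Hx /andP [x1 x2]] /andP [Hy /andP [y1 y2]] Hxy.
by apply: Ssep Hx Hy Hxy simplicial_rect _ _ _ _; rewrite inE.
Qed.

Lemma iso_num_remove_simplicial_ge : iso_num Y <= (iso_num Y').+1.
Proof.
have [S HS ->] := iso_num_witness Y; have /isolatedP [Ssupp Ssep] := HS.
pose S' := [set p | (lift_pos l k p \in S) && (Y' p.1 p.2 == E1)].
have HS' : isolated Y' S'.
  apply/isolatedP; split => [p | p q A B]; rewrite !inE.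
    by case/andP => _ /eqP.
  move=> /andP [Hp _] /andP [Hq _] Hpq /is_rect_lift HAB pA pB qA qB.
  by apply: (Ssep _ _ _ _ Hp Hq _ HAB); rewrite /= ?(inj_eq (@lift_pos_inj _ _ l k)) ?imset_f.
have S_split : S \subset lift_pos l k @: S' :|: setX I0 J0.
  apply/subsetP => x Hx; have [[p Ex Hp] | HIJ] := supp_remove_simplicial (Ssupp _ Hx).
    by rewrite inE Ex imset_f // inE -Ex Hx Hp eqxx.
  by rewrite inE; apply/orP; right; rewrite inE.
rewrite -(setIidPl S_split) setIUr -[(iso_num Y').+1]addn1.
apply: leq_trans (leq_card_setU _ _) (leq_add _ (isolated_card_rect_le1 HS)).
apply: leq_trans (leq_iso_num HS').
by rewrite -(card_imset _ (@lift_pos_inj _ _ l k)) subset_leq_card // subsetIr.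
Qed.

Lemma br_num_remove_simplicial_ge : br_num Y <= (br_num Y').+1.
Proof.
have [F' /rect_coverP [F'rect F'cov] ->] := br_num_witness Y'.
pose F := (I0, J0) |: [set (lift l @: R.1, lift k @: R.2) | R : {set 'I_m} * {set 'I_n} in F'].
apply: (@leq_trans #|F|).
  apply/leq_br_num/rect_coverP; split.
    move=> R /setU1P [-> | /imsetP [R' HR' ->]]; first exact: simplicial_rect.
    exact: is_rect_lift (F'rect _ HR').
  move=> x /supp_remove_simplicial [[p -> /F'cov [R' HR' /andP [pR1 pR2]]] | HIJ].
    by exists (lift l @: R'.1, lift k @: R'.2); rewrite ?inE /= ?imset_f ?orbT.
  by exists (I0, J0); rewrite ?setU11.
by rewrite cardsU1 -[#|F'|.+1]add1n leq_add ?leq_b1 ?leq_imset_card.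
Qed.

Lemma br_num_remove_simplicial_lt : br_num Y' < br_num Y.
Proof.
have [F /rect_coverP [Frect Fcov] ->] := br_num_witness Y.
have [R0 HR0 /andP [lR0 kR0]] := Fcov (l, k) simplicial_eq1.
pose F' := [set (lift l @^-1: R.1, lift k @^-1: R.2)
            | R : {set 'I_m.+1} * {set 'I_n.+1} in F :\ R0].
rewrite (cardsD1 R0 F) HR0 add1n ltnS; apply: (@leq_trans #|F'|); last exact: leq_imset_card.
apply/leq_br_num/rect_coverP; split.
  by move=> _ /imsetP [R /setD1P [_ HR] ->] /=; exact: is_rect_preimage (Frect _ HR).
move=> p Hp; have /remove_simplicial_eq1 [HpY _] := Hp.
have [R HR /andP [pR1 pR2]] := Fcov (lift_pos l k p) HpY.
have HRR0 : R != R0.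
  apply/eqP => ER.
  by apply: (no_rect_simplicial_remove_eq1 Hp (Frect _ HR) _ _ pR1 pR2); rewrite ER.
by exists (lift l @^-1: R.1, lift k @^-1: R.2); rewrite ?imset_f ?inE ?HRR0 //= pR1.
Qed.

End RemoveSimplicial.

Theorem lemma1 (m n : nat) (Y : 'M[entry]_(m.+1, n.+1))
    (l : 'I_m.+1) (k : 'I_n.+1) :
  simplicial Y l k ->
  iso_num Y = (iso_num (remove_simplicial Y l k)).+1 /\
  br_num Y = (br_num (remove_simplicial Y l k)).+1.
Proof.
move=> Ysimpl; split; apply/eqP; rewrite eqn_leq.
  by rewrite iso_num_remove_simplicial_lt // iso_num_remove_simplicial_ge.
by rewrite br_num_remove_simplicial_lt // br_num_remove_simplicial_ge.
Qed.
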